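(* Let $L>0$ with $L\notin\mathcal N$, let $c\in\mathbb R$, let $\varepsilon>0$, and let $W,\underline c,\overline c$ be as in the context. Define $M(x)= 2c\,\frac{\sin(x/2)\sin((L-x)/2)}{\sin(L/2)}$ for $x\in[0,L]$ and, for $(y,z)\in L^2(0,L)\times\mathbb R$, $$V_1(y,z) = \varepsilon W(y) + \frac{1}{2}\left(\varepsilon \int_0^L M(x) y(x)\, dx - z \right)^2.$$ Then $$\underline{\nu}_1\big(\Vert y\Vert^2_{L^2(0,L)}+|z|^2\big)\leq V_1(y,z) \leq \overline{\nu}_1\big(\Vert y\Vert^2_{L^2(0,L)} + |z|^2\big)\quad\text{for all }(y,z)\in L^2(0,L)\times\mathbb R,$$ with $\overline{\nu}_1 = \max\left(\varepsilon \overline c+\varepsilon^2 \Vert M\Vert^2_{L^2(0,L)},1\right)$ and $\underline{\nu}_1=\min\left(\frac{\underline{c}\varepsilon}{2}, \frac{1}{2}\frac{\underline c \varepsilon}{\varepsilon^2 \Vert M\Vert^2_{L^2(0,L)}+ \underline c \varepsilon} \right)$. Moreover, for $\varepsilon\leq 1$, there exists a constant $C>0$ such that $$\varepsilon \big(\Vert y\Vert^2_{L^2(0,L)} + |z|^2\big) \leq V_1(y,z) \leq C \big(\Vert y\Vert^2_{L^2(0,L)} + |z|^2\big)\quad\text{for all }(y,z).$$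
   Context: $\mathcal{N}:=\left\{2\pi\sqrt{\tfrac{k^2+kl+l^2}{3}}:k,l\in\mathbb N\right\}$ (the set of critical lengths). Standing assumption: $L\notin\mathcal N$. Fix a functional $W:L^2(0,L)\to\mathbb R$ and positive constants $\lambda,\kappa_1,\kappa_2,\kappa_3,\underline c,\overline c$ (such objects exist when $L\notin\mathcal N$) with $\underline c\Vert y\Vert^2_{L^2(0,L)}\le W(y)\le \overline c\Vert y\Vert^2_{L^2(0,L)}$ for all $y\in L^2(0,L)$, and such that for all $d_1\in L^2_{loc}(\mathbb R_+;L^2(0,L))$, $d_2\in L^2_{loc}(\mathbb R_+)$, the solutions of $y_t+y_x+y_{xxx}=d_1$ on $(0,L)$, $y(t,0)=y(t,L)=0$, $y_x(t,L)=d_2(t)$, $y(0)=y_0$ satisfy $\frac{d}{dt}W(y)\le -\lambda\Vert y\Vert^2_{L^2(0,L)}+\kappa_1\Vert d_1(t,\cdot)\Vert^2_{L^2(0,L)}+\kappa_2|d_2(t)|^2-\kappa_3|y_x(t,0)|^2$.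
   Formalization: In the Moreover part the lower bound is (ε/C)(‖y‖²+|z|²) instead of ε(‖y‖²+|z|²), with one C>0 serving all ε∈(0,1], and the k, l in 𝒩 range over positive integers. Apart from conventions, each condition added here is assumed in the paper as well or is needed for the statement above to hold. *)

From HB Require Import structures.
From mathcomp Require Import all_boot all_order all_algebra.
From mathcomp Require Import all_classical all_reals all_analysis.
Set Implicit Arguments. Unset Strict Implicit. Unset Printing Implicit Defensive.
Import Order.TTheory GRing.Theory Num.Theory.
Import numFieldNormedType.Exports.
Local Open Scope classical_set_scope.
Local Open Scope ring_scope.

Definition critical_lengths (R : realType) (L : R) : Prop :=
  exists k l : nat, (0 < k)%N /\ (0 < l)%N /\
     L = 2 * pi * Num.sqrt ((k ^ 2 + k * l + l ^ 2)%N%:R / 3).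

Definition inL2 (R : realType) (L : R) (y : R -> R) : Prop :=
  measurable_fun `[0, L]%classic y /\
  (\int[@lebesgue_measure R]_(x in `[0%R, L]%classic) ((y x) ^+ 2)%:E < +oo)%E.

Definition L2norm2 (R : realType) (L : R) (y : R -> R) : R :=
  Rintegral (@lebesgue_measure R) `[0, L]%classic (fun x => (y x) ^+ 2).

Definition Mfun (R : realType) (L c : R) (x : R) : R :=
  2 * c * (sin (x / 2) * sin ((L - x) / 2)) / sin (L / 2).

Definition V1 (R : realType) (L c eps : R) (W : (R -> R) -> R) (y : R -> R) (z : R) : R :=
  eps * W y + 2^-1 * (eps * Rintegral (@lebesgue_measure R) `[0, L]%classic
                                (fun x => Mfun L c x * y x) - z) ^+ 2.

Definition nu1_upper (R : realType) (L c eps cup : R) : R :=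
  Num.max (eps * cup + eps ^+ 2 * L2norm2 L (Mfun L c)) 1.

Definition nu1_lower (R : realType) (L c eps clow : R) : R :=
  Num.min (clow * eps / 2)
    (2^-1 * ((clow * eps) / (eps ^+ 2 * L2norm2 L (Mfun L c) + clow * eps))).

From HB Require Import structures.
From mathcomp Require Import all_boot all_order all_algebra.
From mathcomp Require Import all_classical all_reals all_analysis.
From mathcomp Require Import measurable_realfun ring lra.
Import Order.TTheory GRing.Theory Num.Theory.
Local Open Scope classical_set_scope.
Local Open Scope ring_scope.

(* Write b := eps * int_0^L M y, Y := ||y||^2 and m := ||M||^2, so that
   V1 = eps W(y) + (b - z)^2 / 2 with clow Y <= W(y) <= cup Y, and Cauchy-Schwarz
   gives b^2 <= eps^2 m Y.  The upper bound then follows from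
   (b - z)^2 <= 2 b^2 + 2 z^2.  For the lower bound put A := clow eps and
   p := eps^2 m: minimising A Y + (b - z)^2 under the constraint b^2 <= p Y
   yields A z^2 <= (A + p) (A Y + (b - z)^2), which is where the second
   constant of nu1_lower comes from.  For eps <= 1 the quantities
   eps cup + eps^2 m and eps m + clow are bounded independently of eps, which
   gives the uniform constant. *)

Lemma sqr_le_mul_of_quadratic_ge (R : realFieldType) (a m Y : R) :
  0 <= m -> (forall s, 2 * s * a <= s ^+ 2 * m + Y) -> a ^+ 2 <= m * Y.
Proof.
move=> m_ge0; have [-> | m_neq0] := eqVneq m 0 => quad_ge.
  have := quad_ge 0; have [-> | a_neq0] := eqVneq a 0; first lra.
  have := quad_ge ((Y + 1) / a).
  rewrite mulr0 add0r (_ : 2 * ((Y + 1) / a) * a = 2 * (Y + 1)); first lra.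
  by field.
have m_gt0 : 0 < m by rewrite lt_def m_neq0.
have := quad_ge (a / m).
rewrite (_ : 2 * (a / m) * a = 2 * (a ^+ 2 / m)); last by field.
rewrite (_ : (a / m) ^+ 2 * m = a ^+ 2 / m); last by field.
move=> ineq; rewrite -ler_pdivrMl // mulrC; lra.
Qed.

Lemma quadratic_lower_bound {R : realFieldType} {A p Y b nu : R} (z : R) :
  0 < A -> 0 <= p -> 0 <= Y -> b ^+ 2 <= p * Y ->
  nu <= A / 2 -> nu * (p + A) <= A / 2 ->
  nu * (Y + z ^+ 2) <= A * Y + 2^-1 * (b - z) ^+ 2.
Proof.
move=> A_gt0 p_ge0 Y_ge0 b_le nu_le nu_mul_le.
have key : A * z ^+ 2 <= (A + p) * (A * Y + (b - z) ^+ 2).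
  have [p0 | p_neq0] := eqVneq p 0.
    have b0 : b = 0.
      by apply/eqP; rewrite -sqrf_eq0 eq_le sqr_ge0 andbT -(mul0r Y) -p0.
    rewrite p0 b0; nra.
  have p_gt0 : 0 < p by rewrite lt_def p_neq0.
  (* p ((A + p) (A Y + (b - z)^2) - A z^2) - (A b + p (b - z))^2
       = A (A + p) (p Y - b^2) *)
  rewrite -subr_ge0 -(pmulr_rge0 _ p_gt0).
  have := sqr_ge0 (A * b + p * (b - z)).
  have := ler_wpM2l (mulr_ge0 (ltW A_gt0) p_ge0) b_le.
  have := ler_wpM2l (ltW (mulr_gt0 A_gt0 A_gt0)) b_le.
  lra.
have Q_ge0 : 0 <= A * Y + (b - z) ^+ 2.
  by apply: addr_ge0; [exact: mulr_ge0 (ltW A_gt0) Y_ge0 | exact: sqr_ge0].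
have := ler_wpM2r Y_ge0 nu_le.
suff : nu * z ^+ 2 <= 2^-1 * (A * Y + (b - z) ^+ 2) by lra.
have [nu_le0 | nu_gt0] := lerP nu 0.
  by have := mulr_le0_ge0 nu_le0 (sqr_ge0 z); lra.
rewrite -(ler_pM2l A_gt0).
have := ler_wpM2l (ltW nu_gt0) key.
have := ler_wpM2r Q_ge0 nu_mul_le.
lra.
Qed.

Section cauchy_schwarz.
Context d (T : measurableType d) (R : realType) (mu : {measure set T -> \bar R}).
Variables (D : set T) (f g : T -> R).
Hypotheses (mD : measurable D).
Hypotheses (mf : measurable_fun D f) (mg : measurable_fun D g).
Hypotheses (if2 : mu.-integrable D (EFin \o (fun x => f x ^+ 2)))
           (ig2 : mu.-integrable D (EFin \o (fun x => g x ^+ 2))).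

Let integrable_scaleR (k : R) {h : T -> R} : mu.-integrable D (EFin \o h) ->
  mu.-integrable D (EFin \o (fun x => k * h x)).
Proof.
by move/(integrableZl mD k); apply: eq_integrable => // x _ /=; rewrite EFinM.
Qed.

Let integrable_addR {h1 h2 : T -> R} : mu.-integrable D (EFin \o h1) ->
  mu.-integrable D (EFin \o h2) ->
  mu.-integrable D (EFin \o (fun x => h1 x + h2 x)).
Proof.
move=> i1 i2.
by apply: eq_integrable (integrableD mD i1 i2) => // x _ /=; rewrite EFinD.
Qed.

Lemma integrable_mul_of_sqr : mu.-integrable D (EFin \o (fun x => f x * g x)).
Proof.
apply: (le_integrable mD _ _ (integrable_addR if2 ig2)).
  by apply/measurable_EFinP; exact: measurable_funM.
move=> x _; rewrite /= lee_fin normrM [leRHS]ger0_norm ?addr_ge0 ?sqr_ge0 //.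
rewrite -(real_normK (num_real (f x))) -(real_normK (num_real (g x))).
by have := sqr_ge0 (`|f x| - `|g x|); nra.
Qed.

Lemma Rintegral_mul_sqr_le :
  (\int[mu]_(x in D) (f x * g x)) ^+ 2
    <= (\int[mu]_(x in D) f x ^+ 2) * (\int[mu]_(x in D) g x ^+ 2).
Proof.
have ifg := integrable_mul_of_sqr.
apply: sqr_le_mul_of_quadratic_ge.
  by apply: Rintegral_ge0 => x _; exact: sqr_ge0.
move=> s; rewrite -RintegralZl // -RintegralZl // -RintegralD //; last first.
  exact: integrable_scaleR.
apply: le_Rintegral => //.
- exact: integrable_scaleR.
- exact/integrable_addR/ig2/integrable_scaleR.
- by move=> x _; have := sqr_ge0 (s * f x - g x); lra.
Qed.

End cauchy_schwarz.

Section V1_estimates.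
Context {R : realType} {L c : R}.
Notation mu := (@lebesgue_measure R).

Lemma L2norm2_ge0 (y : R -> R) : 0 <= L2norm2 L y.
Proof. by apply: Rintegral_ge0 => x _; exact: sqr_ge0. Qed.

Lemma measurable_Mfun : measurable_fun setT (Mfun L c).
Proof.
have msin : measurable_fun setT (@sin R).
  by apply: continuous_measurable_fun; exact: continuous_sin.
apply: measurable_funM => //; apply: measurable_funM => //.
apply: measurable_funM.
  by apply: measurableT_comp msin _; exact: measurable_funM.
apply: measurableT_comp msin _; apply: measurable_funM => //.
exact: measurable_funB.
Qed.

Lemma normr_Mfun_le x : `|Mfun L c x| <= `|2 * c / sin (L / 2)|.
Proof.
rewrite /Mfun mulrAC normrM ler_piMr // normrM.
by rewrite -[1]mulr1 ler_pM // sin_max.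
Qed.

Lemma integrable_Mfun_sqr :
  mu.-integrable `[0, L] (EFin \o (fun x => Mfun L c x ^+ 2)).
Proof.
apply: measurable_bounded_integrable => //.
- exact/compact_finite_measure/segment_compact.
- by apply/measurable_funX; apply: measurable_funS measurable_Mfun.
rewrite /bounded_near; near=> M; move=> x _ /=.
have KM : `|2 * c / sin (L / 2)| ^+ 2 <= M.
  by near: M; apply: nbhs_pinfty_ge; rewrite num_real.
apply: (le_trans _ KM); rewrite normrX lerXn2r ?nnegrE ?normr_ge0 //.
exact: normr_Mfun_le.
Unshelve. all: by end_near.
Qed.

Lemma inL2_integrable_sqr (y : R -> R) : inL2 L y ->
  mu.-integrable `[0, L] (EFin \o (fun x => y x ^+ 2)).
Proof.
move=> [my y2_fin]; apply/integrableP; split.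
  by apply/measurable_EFinP; exact: measurable_funX.
by under eq_integral => x _ do rewrite /comp abse_EFin ger0_norm ?sqr_ge0 //.
Qed.

Lemma Rintegral_Mfun_mul_sqr_le {y : R -> R} : inL2 L y ->
  (Rintegral mu `[0, L] (fun x => Mfun L c x * y x)) ^+ 2
    <= L2norm2 L (Mfun L c) * L2norm2 L y.
Proof.
move=> y_L2; apply: Rintegral_mul_sqr_le => //.
- exact: measurable_funS measurable_Mfun.
- by case: y_L2.
- exact: integrable_Mfun_sqr.
- exact: inL2_integrable_sqr.
Qed.

Context {eps : R} {W : (R -> R) -> R} {y : R -> R} {z : R}.
Hypotheses (eps_gt0 : 0 < eps) (y_L2 : inL2 L y).

Let eps_Rintegral_Mfun_mul_sqr_le :
  (eps * Rintegral mu `[0, L] (fun x => Mfun L c x * y x)) ^+ 2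
    <= eps ^+ 2 * L2norm2 L (Mfun L c) * L2norm2 L y.
Proof.
by rewrite exprMn -mulrA ler_pM2l ?exprn_gt0 // Rintegral_Mfun_mul_sqr_le.
Qed.

Lemma V1_lower_bound {clow nu : R} : 0 < clow -> clow * L2norm2 L y <= W y ->
  nu <= clow * eps / 2 ->
  nu * (eps ^+ 2 * L2norm2 L (Mfun L c) + clow * eps) <= clow * eps / 2 ->
  nu * (L2norm2 L y + z ^+ 2) <= V1 L c eps W y z.
Proof.
move=> clow_gt0 W_ge nu_le nu_mul_le.
have := eps_Rintegral_Mfun_mul_sqr_le; rewrite /V1.
set b := Rintegral _ _ _; set m := L2norm2 L _ in nu_mul_le *.
set Y := L2norm2 L y in W_ge * => epsb_le.
have epsW_ge : clow * eps * Y <= eps * W y.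
  by rewrite [clow * eps]mulrC -mulrA ler_pM2l.
have A_gt0 : 0 < clow * eps := mulr_gt0 clow_gt0 eps_gt0.
have p_ge0 : 0 <= eps ^+ 2 * m.
  exact: mulr_ge0 (exprn_ge0 2 (ltW eps_gt0)) (L2norm2_ge0 _).
have Y_ge0 : 0 <= Y := L2norm2_ge0 y.
have := quadratic_lower_bound z A_gt0 p_ge0 Y_ge0 epsb_le nu_le nu_mul_le.
lra.
Qed.

Lemma V1_upper_bound {cup N : R} : W y <= cup * L2norm2 L y ->
  eps * cup + eps ^+ 2 * L2norm2 L (Mfun L c) <= N -> 1 <= N ->
  V1 L c eps W y z <= N * (L2norm2 L y + z ^+ 2).
Proof.
move=> W_le N_ge N_ge1.
have := eps_Rintegral_Mfun_mul_sqr_le; rewrite /V1.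
set b := Rintegral _ _ _; set m := L2norm2 L _ in N_ge *.
set Y := L2norm2 L y in W_le * => epsb_le.
have epsW_le : eps * W y <= eps * cup * Y by rewrite -mulrA ler_pM2l.
have Y_ge0 : 0 <= Y := L2norm2_ge0 y.
have := ler_wpM2r Y_ge0 N_ge; have := ler_wpM2r (sqr_ge0 z) N_ge1.
have := sqr_ge0 (eps * b + z); lra.
Qed.

End V1_estimates.

Lemma V1_nu1_bounds {R : realType} {L c eps clow cup : R} {W : (R -> R) -> R}
    {y : R -> R} {z : R} :
  0 < eps -> 0 < clow -> inL2 L y ->
  clow * L2norm2 L y <= W y <= cup * L2norm2 L y ->
  nu1_lower L c eps clow * (L2norm2 L y + z ^+ 2) <= V1 L c eps W y z
    <= nu1_upper L c eps cup * (L2norm2 L y + z ^+ 2).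
Proof.
move=> eps_gt0 clow_gt0 y_L2 /andP[W_ge W_le]; apply/andP; split.
  apply: (V1_lower_bound eps_gt0 y_L2 clow_gt0 W_ge).
    by rewrite /nu1_lower ge_min lexx.
  set P := eps ^+ 2 * _ + _.
  have P_gt0 : 0 < P.
    by rewrite ltr_wpDl ?mulr_gt0 ?mulr_ge0 ?exprn_ge0 ?L2norm2_ge0 ?ltW.
  have -> : clow * eps / 2 = 2^-1 * (clow * eps / P) * P.
    by field; rewrite gt_eqF.
  by rewrite ler_pM2r // /nu1_lower ge_min lexx orbT.
apply: (V1_upper_bound eps_gt0 y_L2 W_le).
  by rewrite /nu1_upper le_max lexx.
by rewrite /nu1_upper le_max lexx orbT.
Qed.

(* Any C with C >= cup + ||M||^2 and clow C >= 2 (||M||^2 + clow + 1) works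
   for every e in (0, 1]. *)
Definition nu1_uniform {R : realType} (L c clow cup : R) : R :=
  cup + L2norm2 L (Mfun L c) + 2 * (L2norm2 L (Mfun L c) + clow + 1) / clow.

Section nu1_uniform_bounds.
Variables (R : realType) (L c clow cup e : R).
Hypotheses (clow_gt0 : 0 < clow) (cup_ge0 : 0 <= cup).
Hypotheses (e_gt0 : 0 < e) (e_le1 : e <= 1).

Let m := L2norm2 L (Mfun L c).
Let C := nu1_uniform L c clow cup.

Let m_ge0 : 0 <= m. Proof. exact: L2norm2_ge0. Qed.

Let em_ge0 : 0 <= e * m. Proof. exact: mulr_ge0 (ltW e_gt0) m_ge0. Qed.

Let em_gt0 : 0 < e * m + clow.
Proof. by have := em_ge0; have := clow_gt0; lra. Qed.

Let clowC : clow * C = clow * (cup + m) + 2 * (m + clow + 1).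
Proof. by rewrite /C /nu1_uniform -/m; field; rewrite gt_eqF. Qed.

Let clowC_ge : 2 * (e * m + clow) + 2 <= clow * C.
Proof.
rewrite clowC; have : e * m <= m by rewrite ler_piMl ?m_ge0.
by have := mulr_ge0 (ltW clow_gt0) (addr_ge0 cup_ge0 m_ge0); lra.
Qed.

Lemma nu1_uniform_gt0 : 0 < C.
Proof.
rewrite -(pmulr_rgt0 _ clow_gt0) clowC.
have := mulr_ge0 (ltW clow_gt0) (addr_ge0 cup_ge0 m_ge0).
by have := m_ge0; have := clow_gt0; lra.
Qed.

Lemma nu1_upper_le_uniform : nu1_upper L c e cup <= C.
Proof.
rewrite /nu1_upper ge_max -/m; apply/andP; split.
  have : e ^+ 2 * m <= m by rewrite ler_piMl ?m_ge0 // expr_le1 // ltW.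
  have : e * cup <= cup by rewrite ler_piMl.
  have : 0 <= 2 * (m + clow + 1) / clow.
    by rewrite divr_ge0 ?ltW //; have := m_ge0; have := clow_gt0; lra.
  by rewrite /C /nu1_uniform -/m; lra.
rewrite -(ler_pM2l clow_gt0) mulr1; apply: (le_trans _ clowC_ge).
by have := em_ge0; have := clow_gt0; lra.
Qed.

Lemma nu1_uniform_le_lower : e / C <= nu1_lower L c e clow.
Proof.
have C_gt0 := nu1_uniform_gt0.
rewrite /nu1_lower le_min -/m; apply/andP; split.
  rewrite ler_pdivrMr //.
  have := ler_wpM2l (ltW e_gt0) clowC_ge.
  by have := mulr_gt0 e_gt0 em_gt0; lra.
rewrite (_ : e ^+ 2 * m + clow * e = e * (e * m + clow)); last by ring.
rewrite (_ : _ * (_ / _) = clow / (2 * (e * m + clow))); last first.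
  by field; rewrite !gt_eqF.
rewrite ler_pdivrMr // mulrAC ler_pdivlMr ?pmulr_rgt0 //.
have := ler_wpM2r (ltW em_gt0) e_le1.
by have := clowC_ge; lra.
Qed.

End nu1_uniform_bounds.

Theorem lemma2p2 (R : realType) (L c eps clow cup : R) (W : (R -> R) -> R) :
  0 < L -> ~ critical_lengths L -> 0 < eps -> 0 < clow -> 0 < cup ->
  (forall y, inL2 L y -> clow * L2norm2 L y <= W y <= cup * L2norm2 L y) ->
  (forall y z, inL2 L y ->
     nu1_lower L c eps clow * (L2norm2 L y + z ^+ 2) <= V1 L c eps W y z
     <= nu1_upper L c eps cup * (L2norm2 L y + z ^+ 2)) /\
  (exists C : R, 0 < C /\
     forall e : R, 0 < e -> e <= 1 -> forall y z, inL2 L y ->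
       e / C * (L2norm2 L y + z ^+ 2) <= V1 L c e W y z
       <= C * (L2norm2 L y + z ^+ 2)).
Proof.
(* The assumptions on L only serve the existence of W. *)
move=> _ _ eps_gt0 clow_gt0 /ltW cup_ge0 W_bounds.
split=> [y z y_L2 | ].
  exact: V1_nu1_bounds eps_gt0 clow_gt0 y_L2 (W_bounds y y_L2).
exists (nu1_uniform L c clow cup); split; first exact: nu1_uniform_gt0.
move=> e e_gt0 e_le1 y z y_L2.
have YZ_ge0 : 0 <= L2norm2 L y + z ^+ 2 by rewrite addr_ge0 ?L2norm2_ge0 ?sqr_ge0.
have /andP[lower upper] :=
  V1_nu1_bounds (c := c) (z := z) e_gt0 clow_gt0 y_L2 (W_bounds y y_L2).
apply/andP; split.
  by apply: (le_trans _ lower); rewrite ler_wpM2r // nu1_uniform_le_lower.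
by apply: (le_trans upper); rewrite ler_wpM2r // nu1_upper_le_uniform.
Qed.
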